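(* Let $\Lambda$ be a unital commutative ring, $q$ a non-negative integer, $\Lambda_q=\Lambda/q\Lambda$, and $\mathfrak g$ a Lie algebra over $\Lambda$ such that $\mathfrak g/(\mathfrak g\#_q\mathfrak g)$ is a free $\Lambda_q$-module. Let $i\colon\Gamma\big(\mathfrak g/(\mathfrak g\#_q\mathfrak g)\big)\to\mathfrak g\otimes^q\mathfrak g$ be the homomorphism $i\big(\gamma(g+\mathfrak g\#_q\mathfrak g)\big)=g\otimes g$, and let $p\colon\mathfrak g\otimes^q\mathfrak g\to\big(\mathfrak g/(\mathfrak g\#_q\mathfrak g)\big)\otimes^q\big(\mathfrak g/(\mathfrak g\#_q\mathfrak g)\big)$ be the canonical projection. Then $i\big(\Gamma(\mathfrak g/(\mathfrak g\#_q\mathfrak g))\big)\cap\operatorname{Ker}p=\{0\}$.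
   Context: All Lie algebras are over $\Lambda$. $\mathfrak g\#_q\mathfrak g$ is the $\Lambda$-submodule (an ideal) of $\mathfrak g$ generated by all $[h,g]$ and $qh'$, $h,h',g\in\mathfrak g$. Non-abelian $q$-tensor square: for $q\ge1$, $\mathfrak g\otimes^q\mathfrak g$ is the Lie algebra generated by symbols $h\otimes g$ and $\{h\}$ ($h,g\in\mathfrak g$) subject to, for all $h,h',g,g'\in\mathfrak g$, $\lambda,\lambda'\in\Lambda$: (1) $\lambda(h\otimes g)=\lambda h\otimes g=h\otimes\lambda g$; (2) $(h+h')\otimes g=h\otimes g+h'\otimes g$; (3) $h\otimes(g+g')=h\otimes g+h\otimes g'$; (4) $[h,h']\otimes g=h\otimes[h',g]-h'\otimes[h,g]$; (5) $h\otimes[g,g']=[g',h]\otimes g-[g,h]\otimes g'$; (6) $[h\otimes g,h'\otimes g']=[h,g]\otimes[h',g']$; (7) $[\{h'\},h\otimes g]=[qh',h]\otimes g+h\otimes[qh',g]$; (8) $\{\lambda h+\lambda'h'\}=\lambda\{h\}+\lambda'\{h'\}$; (9) $[\{h\},\{h'\}]=qh\otimes qh'$; (10) $\{[h,g]\}=q(h\otimes g)$. For $q=0$, generated by the $h\otimes g$ subject to (1)–(6) only. The map $p$ is induced by the quotient map $\mathfrak g\to\mathfrak g/(\mathfrak g\#_q\mathfrak g)$. Whitehead's quadratic functor: for a $\Lambda$-module $A$, $\Gamma(A)$ is the $\Lambda$-module generated by $\gamma(a)$, $a\in A$, subject to $\lambda^2\gamma(a)=\gamma(\lambda a)$; $\gamma(a+b+c)+\gamma(a)+\gamma(b)+\gamma(c)=\gamma(a+b)+\gamma(a+c)+\gamma(b+c)$;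 $\gamma(\lambda a+b)+\lambda\gamma(a)+\lambda\gamma(b)=\lambda\gamma(a+b)+\gamma(\lambda a)+\gamma(b)$. *)

From HB Require Import structures.
From mathcomp Require Import all_boot all_order all_algebra.
Set Implicit Arguments. Unset Strict Implicit. Unset Printing Implicit Defensive.
Import GRing.Theory.
Local Open Scope ring_scope.

Section Defs.
Variable R : comPzRingType.

Definition lin (U V : lmodType R) (f : U -> V) : Prop :=
  forall (a : R) (x y : U), f (a *: x + y) = a *: f x + f y.

Record lie_axioms (L : lmodType R) (br : L -> L -> L) : Prop := {
  lie_linl : forall z (a : R) x y, br (a *: x + y) z = a *: br x z + br y z;
  lie_linr : forall x (a : R) y z, br x (a *: y + z) = a *: br x y + br x z;
  lie_alt  : forall x, br x x = 0;
  lie_jacobi : forall x y z, br x (br y z) + br y (br z x) + br z (br x y) = 0 }.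

Definition lie_hom (L L' : lmodType R) (br : L -> L -> L) (br' : L' -> L' -> L')
  (f : L -> L') : Prop := lin f /\ forall x y, f (br x y) = br' (f x) (f y).

Definition submod_P (L : lmodType R) (P : L -> Prop) : Prop :=
  P 0 /\ (forall x y, P x -> P y -> P (x + y)) /\ (forall (a : R) x, P x -> P (a *: x)).

Definition qsharp (q : nat) (L : lmodType R) (br : L -> L -> L) (x : L) : Prop :=
  forall P : L -> Prop, submod_P P -> (forall h g, P (br h g)) ->
    (forall h, P (h *+ q)) -> P x.

Definition is_quotient_by (L Q : lmodType R) (I : L -> Prop) (pi : L -> Q) : Prop :=
  lin pi /\ (forall y, exists x, pi x = y) /\ (forall x, pi x = 0 <-> I x).

(* Q (a Lambda-module killed by q) is free as a Lambda_q = Lambda/q Lambda-module: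
   it has a family e spanning it, linearly independent modulo q Lambda. *)
Definition free_mod_q (q : nat) (Q : lmodType R) : Prop :=
  exists (J : eqType) (e : J -> Q),
    (forall x, exists (s : seq J) (c : J -> R), x = \sum_(j <- s) c j *: e j) /\
    (forall (s : seq J) (c : J -> R), uniq s -> \sum_(j <- s) c j *: e j = 0 ->
       forall j, j \in s -> exists r : R, c j = q%:R * r).

Definition gamma_rel (A M : lmodType R) (ga : A -> M) : Prop :=
  (forall (l : R) a, ga (l *: a) = (l * l) *: ga a) /\
  (forall a b c, ga (a + b + c) + ga a + ga b + ga c = ga (a + b) + ga (a + c) + ga (b + c)) /\
  (forall (l : R) a b, ga (l *: a + b) + l *: ga a + l *: ga b
                       = l *: ga (a + b) + ga (l *: a) + ga b).

Definition is_Gamma (A G : lmodType R) (ga : A -> G) : Prop :=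
  gamma_rel ga /\
  forall (M : lmodType R) (f : A -> M), gamma_rel f ->
    exists phi : G -> M, lin phi /\ (forall a, phi (ga a) = f a) /\
      forall psi : G -> M, lin psi -> (forall a, psi (ga a) = f a) -> forall y, psi y = phi y.

(* Defining relations (1)-(10) of the non-abelian q-tensor square; for q = 0
   only (1)-(6) are imposed, and the symbols {h} are forced to be 0 (so they
   generate nothing). t h g stands for h (x) g, c h for {h}. *)
Definition qtens_rel (q : nat) (L : lmodType R) (brL : L -> L -> L)
  (T : lmodType R) (brT : T -> T -> T) (t : L -> L -> T) (c : L -> T) : Prop :=
  (forall (l : R) h g, l *: t h g = t (l *: h) g /\ t (l *: h) g = t h (l *: g)) /\
  (forall h h' g, t (h + h') g = t h g + t h' g) /\
  (forall h g g', t h (g + g') = t h g + t h g') /\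
  (forall h h' g, t (brL h h') g = t h (brL h' g) - t h' (brL h g)) /\
  (forall h g g', t h (brL g g') = t (brL g' h) g - t (brL g h) g') /\
  (forall h g h' g', brT (t h g) (t h' g') = t (brL h g) (brL h' g')) /\
  (if q == 0%N then forall h, c h = 0 else
   (forall h' h g, brT (c h') (t h g) = t (brL (h' *+ q) h) g + t h (brL (h' *+ q) g)) /\
   (forall (l l' : R) h h', c (l *: h + l' *: h') = l *: c h + l' *: c h') /\
   (forall h h', brT (c h) (c h') = t (h *+ q) (h' *+ q)) /\
   (forall h g, c (brL h g) = t h g *+ q)).

(* (T, brT, t, c) is the non-abelian q-tensor square of (L, brL): the Lie algebra
   presented by the generators and relations above, characterised by its
   universal property (initial object). *)
Definition is_qtensor (q : nat) (L : lmodType R) (brL : L -> L -> L)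
  (T : lmodType R) (brT : T -> T -> T) (t : L -> L -> T) (c : L -> T) : Prop :=
  lie_axioms brT /\ qtens_rel q brL brT t c /\
  forall (T' : lmodType R) (brT' : T' -> T' -> T') (t' : L -> L -> T') (c' : L -> T'),
    lie_axioms brT' -> qtens_rel q brL brT' t' c' ->
    exists phi : T -> T', lie_hom brT brT' phi /\
      (forall h g, phi (t h g) = t' h g) /\ (forall h, phi (c h) = c' h) /\
      forall psi : T -> T', lie_hom brT brT' psi ->
        (forall h g, psi (t h g) = t' h g) -> (forall h, psi (c h) = c' h) ->
        forall x, psi x = phi x.

End Defs.

(* Since g #_q g contains every bracket and every q-multiple, Q = g/(g #_q g)
   is abelian and killed by q.  Hence any bilinear form B on Q, with values in a
   Lie algebra with zero bracket, satisfies the defining relations of Q (x)^q Q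
   with {h} sent to 0, and so factors through Q (x)^q Q.  Because Q is free over
   Lambda/q, the quadratic map a |-> i (gamma a) is the diagonal of such a form:
   on a basis put B(e_j, e_j) = i (gamma e_j) and give each polarization
   i (gamma (e_j + e_j')) - i (gamma e_j) - i (gamma e_j') to exactly one of
   B(e_j, e_j'), B(e_j', e_j).  The induced phi : Q (x)^q Q -> g (x)^q g then
   satisfies phi (p (i (gamma a))) = B(a, a) = i (gamma a), so phi o p o i = i by
   the universal property of Gamma, and i x = 0 whenever p (i x) = 0. *)

From mathcomp Require Import all_boot all_order all_algebra.
From Stdlib Require Import ClassicalEpsilon FunctionalExtensionality ProofIrrelevance.
Set Implicit Arguments. Unset Strict Implicit. Unset Printing Implicit Defensive.
Import GRing.Theory.
Local Open Scope ring_scope.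

(* Proves an identity between sums of atoms and opposites of atoms in an abelian
   group: everything is moved to the left and each summand is cancelled against
   its opposite.  [split_off t s k] calls [k] on a proof of [s = t + s']. *)
Ltac split_off t s kont :=
  lazymatch s with
  | ?x + ?s' =>
      tryif unify x t then kont constr:(@erefl _ s) else
      split_off t s' ltac:(fun E =>
        lazymatch type of E with _ = ?y + ?s'' =>
          kont constr:(eq_trans (f_equal (fun z => x + z) E) (addrCA x y s'')) end)
  | _ => tryif unify s t then kont constr:(esym (addr0 s)) else fail
  end.

Ltac cancel_summands :=
  lazymatch goal with
  | |- 0 = 0 => reflexivity
  | |- ?x + ?s = 0 =>
      let nx := lazymatch x with - ?y => y | _ => constr:(- x) end in
      split_off nx s ltac:(fun E =>
        apply: (eq_trans (f_equal (fun z => x + z) E));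
        rewrite ?addNKr ?addKr ?opprK ?addr0; cancel_summands)
  end.

Ltac zmod_cancel := apply/eqP; rewrite -subr_eq0; apply/eqP;
  rewrite ?opprD ?opprK ?oppr0 ?addr0 ?add0r -?addrA; cancel_summands.

Section LinearMaps.
Variable R : comPzRingType.
Implicit Types U V W : lmodType R.

Lemma lin0 U V (f : U -> V) : lin f -> f 0 = 0.
Proof.
move=> fL; have := fL 1 0 0; rewrite scaler0 addr0 scale1r => f0D.
by apply: (@addrI _ (f 0)); rewrite addr0 -f0D.
Qed.

Lemma linD U V (f : U -> V) : lin f -> {morph f : x y / x + y}.
Proof. by move=> fL x y; have := fL 1 x y; rewrite !scale1r. Qed.

Lemma linZ U V (f : U -> V) : lin f -> forall a x, f (a *: x) = a *: f x.
Proof. by move=> fL a x; have := fL a x 0; rewrite !addr0 (lin0 fL) addr0. Qed.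

Lemma linMn U V (f : U -> V) : lin f -> forall x n, f (x *+ n) = f x *+ n.
Proof.
move=> fL x; elim=> [|n IHn]; first by rewrite !mulr0n (lin0 fL).
by rewrite !mulrS (linD fL) IHn.
Qed.

Lemma lin_sum U V (f : U -> V) (I : Type) (s : seq I) (c : I -> R) (x : I -> U) :
  lin f -> f (\sum_(i <- s) c i *: x i) = \sum_(i <- s) c i *: f (x i).
Proof.
move=> fL; elim: s => [|i s IHs]; first by rewrite !big_nil (lin0 fL).
by rewrite !big_cons (linD fL) (linZ fL) IHs.
Qed.

Lemma lin_comp U V W (f : U -> V) (g : V -> W) : lin f -> lin g -> lin (g \o f).
Proof. by move=> fL gL a x y /=; rewrite fL gL. Qed.

Definition bilin U V (B : U -> U -> V) : Prop :=
  (forall b, lin (B^~ b)) /\ (forall a, lin (B a)).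

End LinearMaps.

Section QuadraticMaps.
Variables (R : comPzRingType) (U V : lmodType R) (k : U -> V).
Hypothesis kQ : gamma_rel k.

Lemma gamma_rel_comp (W : lmodType R) (f : V -> W) : lin f -> gamma_rel (f \o k).
Proof.
have [kZ [kD3 kZD]] := kQ; move=> fL; split; [|split] => /=.
- by move=> l a; rewrite kZ (linZ fL).
- by move=> a b c; have := congr1 f (kD3 a b c); rewrite !(linD fL).
- by move=> l a b; have := congr1 f (kZD l a b); rewrite !(linD fL) !(linZ fL).
Qed.

Definition polar (a b : U) : V := k (a + b) - k a - k b.

Lemma quad0 : k 0 = 0.
Proof. by have := kQ.1 0 0; rewrite scale0r mul0r scale0r. Qed.

Lemma quadD a b : k (a + b) = k a + k b + polar a b.
Proof. rewrite /polar; zmod_cancel. Qed.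

Lemma polarC a b : polar a b = polar b a.
Proof. by rewrite /polar [b + a]addrC addrAC. Qed.

Lemma polar_linl b : lin (polar^~ b).
Proof.
have [_ [kD3 kZD]] := kQ; move=> l a a'; rewrite /polar.
have -> : k (l *: a + a' + b) = k (l *: a + a') + k (l *: a + b) + k (a' + b)
    - k b - k a' - k (l *: a) by rewrite -kD3 !addrK.
have -> : k (l *: a + a') = l *: k (a + a') + k (l *: a) + k a'
    - l *: k a' - l *: k a by rewrite -kZD !addrK.
have -> : k (l *: a + b) = l *: k (a + b) + k (l *: a) + k b
    - l *: k b - l *: k a by rewrite -kZD !addrK.
rewrite !scalerBr; zmod_cancel.
Qed.

Lemma polar_linr a : lin (polar a).
Proof. by move=> l b b'; rewrite !(polarC a); apply: polar_linl. Qed.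

End QuadraticMaps.

Lemma is_Gamma_lin_eq (R : comPzRingType) (A G M : lmodType R) (ga : A -> G)
    (f f' : G -> M) :
  is_Gamma ga -> lin f -> lin f' -> (forall a, f (ga a) = f' (ga a)) -> f =1 f'.
Proof.
move=> [gaQ ga_univ] fL f'L ff' x.
have [phi [_ [_ phi_uniq]]] := ga_univ M (f' \o ga) (gamma_rel_comp gaQ f'L).
by rewrite (phi_uniq f) // (phi_uniq f').
Qed.

Section PickOfPair.
Variable T : eqType.

Definition pick2 (x y : T) : T := epsilon (inhabits x) (fun z => (z == x) || (z == y)).

Lemma pick2C x y : pick2 x y = pick2 y x.
Proof.
rewrite /pick2 (proof_irrelevance _ (inhabits x) (inhabits y)); congr epsilon.
by apply: functional_extensionality => z; rewrite orbC.
Qed.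

Lemma pick2P x y : (pick2 x y == x) || (pick2 x y == y).
Proof.
by apply: (epsilon_spec _ (fun z => (z == x) || (z == y))); exists x; rewrite eqxx.
Qed.

End PickOfPair.

Section FreeModulesModq.
Variables (R : comPzRingType) (q : nat) (Q : lmodType R) (J : eqType) (e : J -> Q).
Hypothesis e_span :
  forall x, exists (s : seq J) (c : J -> R), x = \sum_(j <- s) c j *: e j.
Hypothesis e_free : forall (s : seq J) (c : J -> R), uniq s ->
  \sum_(j <- s) c j *: e j = 0 -> forall j, j \in s -> exists r : R, c j = q%:R * r.

Lemma sum_regroup (M : lmodType R) (X : J -> M) (s u : seq J) (c : J -> R) :
  uniq u -> {subset s <= u} ->
  \sum_(i <- s) c i *: X i = \sum_(j <- u) (\sum_(i <- s | i == j) c i) *: X j.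
Proof.
move=> u_uniq su; under [RHS]eq_bigr => j _ do rewrite scaler_suml.
rewrite (exchange_big_dep predT) //=; apply: eq_big_seq => i /su iu.
rewrite -big_filter (eq_filter (_ : _ =1 pred1 i)) => [|j]; last exact: eq_sym.
by rewrite filter_pred1_uniq // big_seq1.
Qed.

Lemma span2 x y : exists u cx cy, [/\ uniq u,
  x = \sum_(j <- u) cx j *: e j & y = \sum_(j <- u) cy j *: e j].
Proof.
have [s [c ->]] := e_span x; have [s' [c' ->]] := e_span y.
have u_uniq : uniq (undup (s ++ s')) by exact: undup_uniq.
exists (undup (s ++ s')); do 2 eexists; split => //; apply: sum_regroup => // j js;
  by rewrite mem_undup mem_cat js ?orbT.
Qed.

Definition represents (x : Q) (sc : seq J * (J -> R)) : Prop :=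
  x = \sum_(j <- sc.1) sc.2 j *: e j.

Definition rep (x : Q) : seq J * (J -> R) :=
  epsilon (inhabits ([::], fun=> 0)) (represents x).

Lemma repP x : represents x (rep x).
Proof. by apply: epsilon_spec; have [s [c xE]] := e_span x; exists (s, c). Qed.

Definition extend (M : lmodType R) (E : J -> M) (x : Q) : M :=
  \sum_(j <- (rep x).1) (rep x).2 j *: E j.

Lemma extendZD (M : lmodType R) (l : R) (E E' : J -> M) x :
  extend (fun j => l *: E j + E' j) x = l *: extend E x + extend E' x.
Proof.
rewrite /extend scaler_sumr -big_split /=; apply: eq_bigr => j _.
by rewrite scalerDr !scalerA mulrC.
Qed.

Section Extension.
Variables (M : lmodType R) (E : J -> M).
Hypothesis E_char : forall j, E j *+ q = 0.

Lemma sum_basis_congr (s s' : seq J) (c c' : J -> R) :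
  \sum_(j <- s) c j *: e j = \sum_(j <- s') c' j *: e j ->
  \sum_(j <- s) c j *: E j = \sum_(j <- s') c' j *: E j.
Proof.
set u := undup (s ++ s'); have u_uniq : uniq u by exact: undup_uniq.
have su : {subset s <= u} by move=> j js; rewrite mem_undup mem_cat js.
have s'u : {subset s' <= u} by move=> j js; rewrite mem_undup mem_cat js orbT.
set d := fun j => \sum_(i <- s | i == j) c i - \sum_(i <- s' | i == j) c' i.
have sum_d (N : lmodType R) (X : J -> N) : \sum_(j <- u) d j *: X j
    = \sum_(j <- s) c j *: X j - \sum_(j <- s') c' j *: X j.
  by rewrite (sum_regroup _ _ u_uniq su) (sum_regroup _ _ u_uniq s'u) -sumrB;
     apply: eq_bigr => j _; rewrite scalerBl.
move=> ce; apply/eqP; rewrite -subr_eq0 -sum_d; apply/eqP.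
have /e_free d_q : \sum_(j <- u) d j *: e j = 0 by rewrite sum_d ce subrr.
rewrite big1_seq // => j /andP[_ ju]; have [r ->] := d_q u_uniq j ju.
by rewrite mulrC -scalerA scaler_nat E_char scaler0.
Qed.

Lemma extend_sum s c : extend E (\sum_(j <- s) c j *: e j) = \sum_(j <- s) c j *: E j.
Proof. by apply: sum_basis_congr; rewrite -repP. Qed.

Lemma lin_extend : lin (extend E).
Proof.
move=> a x y; have [u [cx [cy [_ -> ->]]]] := span2 x y.
rewrite scaler_sumr -big_split /=.
under eq_bigr do rewrite scalerA -scalerDl.
rewrite !extend_sum scaler_sumr -big_split /=.
by apply: eq_bigr => j _; rewrite scalerA scalerDl.
Qed.

Lemma extend_char x : extend E x *+ q = 0.
Proof.
rewrite /extend -sumrMnl big1 // => j _.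
by rewrite scalerMnr E_char scaler0.
Qed.

Lemma extend_basis j : extend E (e j) = E j.
Proof. by have := extend_sum [:: j] (fun=> 1); rewrite !big_seq1 !scale1r. Qed.
End Extension.

Definition extend2 (M : lmodType R) (C : J -> J -> M) (a b : Q) : M :=
  extend (fun j' => extend (C^~ j') a) b.

Section Extension2.
Variables (M : lmodType R) (C : J -> J -> M).
Hypothesis C_char : forall j j', C j j' *+ q = 0.

Lemma bilin_extend2 : bilin (extend2 C).
Proof.
split=> [b l a a' | a]; last by apply: lin_extend => j'; apply: extend_char.
rewrite /extend2 -extendZD; congr extend; apply: functional_extensionality => j'.
by apply: lin_extend.
Qed.

Lemma extend2_basis j j' : extend2 C (e j) (e j') = C j j'.
Proof.
rewrite /extend2 extend_basis; last by move=> i; apply: extend_char.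
by rewrite extend_basis.
Qed.

End Extension2.

Section QuadraticMapsOnFree.
Variables (M : lmodType R) (k : Q -> M).
Hypothesis kQ : gamma_rel k.

Lemma bilin_diag (B : Q -> Q -> M) : bilin B ->
  (forall j, B (e j) (e j) = k (e j)) ->
  (forall j j', j != j' -> B (e j) (e j') + B (e j') (e j) = polar k (e j) (e j')) ->
  forall a, B a a = k a.
Proof.
move=> [BLl BLr] B_diag B_polar a; have [u [c [_ [u_uniq -> _]]]] := span2 a a.
elim: u u_uniq => [|j0 u IHu] /=; first by rewrite big_nil (lin0 (BLr 0)) quad0.
case/andP=> j0u u_uniq; rewrite big_cons; set S := \sum_(j <- u) _.
have cross : B (e j0) S + B S (e j0) = polar k (e j0) S.
  rewrite (lin_sum _ _ _ (BLr _)) (lin_sum _ _ _ (BLl _)).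
  rewrite (lin_sum _ _ _ (polar_linr kQ _)).
  rewrite -big_split; apply: eq_big_seq => j ju /=; rewrite -scalerDr B_polar //.
  by apply: contraNneq j0u => ->.
rewrite (linD (BLl _)) !(linD (BLr _)) !(linZ (BLl _)) !(linZ (BLr _)).
rewrite (quadD k) kQ.1 (linZ (polar_linl kQ _)) -cross B_diag -IHu //.
rewrite !scalerDr !scalerA; zmod_cancel.
Qed.

Hypothesis Q_char : forall a : Q, a *+ q = 0.
Hypothesis k_char : forall a, k a *+ q = 0.

(* J has no order, so pick2 decides which of B(e_j, e_j'), B(e_j', e_j)
   carries the polarization. *)
Definition quad_coef (j j' : J) : M :=
  if j == j' then k (e j) else if pick2 j j' == j then polar k (e j) (e j') else 0.

Lemma quad_coef_char j j' : quad_coef j j' *+ q = 0.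
Proof.
rewrite /quad_coef; case: eqP => _; first exact: k_char.
case: eqP => _; last by rewrite mul0rn.
by rewrite -(linMn (polar_linl kQ _)) Q_char (lin0 (polar_linl kQ _)).
Qed.

Lemma quad_coefC j j' : j != j' ->
  quad_coef j j' + quad_coef j' j = polar k (e j) (e j').
Proof.
move=> jj'; have j'j : j' != j by rewrite eq_sym.
rewrite /quad_coef (negPf jj') (negPf j'j) pick2C.
have /orP[/eqP-> | /eqP->] := pick2P j' j.
  by rewrite eqxx (negPf j'j) add0r polarC.
by rewrite eqxx (negPf jj') addr0.
Qed.

Lemma quadratic_diag_bilin : exists B : Q -> Q -> M, bilin B /\ forall a, B a a = k a.
Proof.
exists (extend2 quad_coef); split; first exact: bilin_extend2 quad_coef_char.
apply: bilin_diag => [|j|j j' jj']; first exact: bilin_extend2 quad_coef_char.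
  by rewrite (extend2_basis quad_coef_char) /quad_coef eqxx.
by rewrite !(extend2_basis quad_coef_char) quad_coefC.
Qed.

End QuadraticMapsOnFree.
End FreeModulesModq.

Section LieQuotients.
Variables (R : comPzRingType) (q : nat).

Lemma lie_axioms0 (T : lmodType R) : lie_axioms (fun _ _ : T => 0).
Proof. by split=> *; rewrite ?scaler0 ?addr0. Qed.

Lemma qsharp_quotient_char (L Q : lmodType R) (br : L -> L -> L) (pi : L -> Q) :
  is_quotient_by (qsharp q br) pi -> forall y : Q, y *+ q = 0.
Proof.
move=> [piL [pi_surj pi_ker]] y; have [x <-] := pi_surj y.
by rewrite -(linMn piL); apply/pi_ker => P _ _ Pq; apply: Pq.
Qed.

Lemma qsharp_quotient_abelian (L Q : lmodType R) (br : L -> L -> L)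
    (brQ : Q -> Q -> Q) (pi : L -> Q) :
  is_quotient_by (qsharp q br) pi -> lie_hom br brQ pi -> forall a b, brQ a b = 0.
Proof.
move=> [_ [pi_surj pi_ker]] [_ pi_br] a b.
have [x <-] := pi_surj a; have [y <-] := pi_surj b.
by rewrite -pi_br; apply/pi_ker => P _ Pbr _; apply: Pbr.
Qed.

Lemma qtens_rel_diag_char (L T : lmodType R) (brL : L -> L -> L) (brT : T -> T -> T)
    (t : L -> L -> T) (c : L -> T) :
  lie_axioms brL -> qtens_rel q brL brT t c -> forall h, t h h *+ q = 0.
Proof.
move=> brLA [_ [_ [_ [_ [_ [_ rel_c]]]]]] h.
move: rel_c; case: eqP => [-> _ | _ [_ [c_lin [_ c_br]]]]; first by rewrite mulr0n.
have := c_lin 0 0 0 0; rewrite !scale0r !addr0 => c0.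
by rewrite -c_br (lie_alt brLA) c0.
Qed.

Lemma qtens_rel_bilin (Q T : lmodType R) (brQ : Q -> Q -> Q) (B : Q -> Q -> T) :
  (forall a b, brQ a b = 0) -> (forall a : Q, a *+ q = 0) -> bilin B ->
  qtens_rel q brQ (fun _ _ => 0) B (fun _ => 0).
Proof.
move=> brQ0 Q_char [BLl BLr]; have B0l b : B 0 b = 0 := lin0 (BLl b).
have B0r a : B a 0 = 0 := lin0 (BLr a).
split; [|split; [|split; [|split; [|split; [|split]]]]].
- by move=> l h g; rewrite (linZ (BLl _)) (linZ (BLr _)).
- by move=> h h' g; rewrite (linD (BLl _)).
- by move=> h g g'; rewrite (linD (BLr _)).
- by move=> h h' g; rewrite !brQ0 B0l !B0r subrr.
- by move=> h g g'; rewrite !brQ0 !B0l subrr.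
- by move=> h g h' g'; rewrite !brQ0 B0r.
- case: eqP => // _; split; [|split; [|split]].
  + by move=> h' h g; rewrite !brQ0 B0l B0r addr0.
  + by move=> *; rewrite !scaler0 addr0.
  + by move=> h h'; rewrite Q_char B0l.
  + by move=> h g; rewrite -(linMn (BLl _)) Q_char B0l.
Qed.

End LieQuotients.

Theorem lemma5p2 (R : comPzRingType) (q : nat)
  (g : lmodType R) (brg : g -> g -> g) (Hg : lie_axioms brg)
  (* Q = g / (g #_q g) with its (induced) Lie structure and projection pi *)
  (Q : lmodType R) (brQ : Q -> Q -> Q) (HQ : lie_axioms brQ) (pi : g -> Q)
  (Hpi : is_quotient_by (qsharp q brg) pi) (Hpihom : lie_hom brg brQ pi)
  (Hfree : free_mod_q q Q)
  (* Gamma(Q) *)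
  (G : lmodType R) (ga : Q -> G) (HG : is_Gamma ga)
  (* g (x)^q g and Q (x)^q Q *)
  (T : lmodType R) (brT : T -> T -> T) (t : g -> g -> T) (c : g -> T)
  (HT : is_qtensor q brg brT t c)
  (TQ : lmodType R) (brTQ : TQ -> TQ -> TQ) (tQ : Q -> Q -> TQ) (cQ : Q -> TQ)
  (HTQ : is_qtensor q brQ brTQ tQ cQ)
  (* i : Gamma(Q) -> g (x)^q g, gamma(x + g#g) |-> x (x) x *)
  (i : G -> T) (Hi : lin i) (Hi_def : forall x, i (ga (pi x)) = t x x)
  (* p : g (x)^q g -> Q (x)^q Q, the map induced by pi *)
  (p : T -> TQ) (Hp : lie_hom brT brTQ p)
  (Hp_t : forall h k, p (t h k) = tQ (pi h) (pi k))
  (Hp_c : forall h, p (c h) = cQ (pi h)) :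
  forall y : T, (exists x : G, y = i x) -> p y = 0 -> y = 0.
Proof.
move=> _ [x ->] pix0.
have [J [e [e_span e_free]]] := Hfree.
have Q_char := qsharp_quotient_char Hpi.
have k_quad : gamma_rel (i \o ga) := gamma_rel_comp HG.1 Hi.
have k_char a : i (ga a) *+ q = 0.
  have [z <-] := Hpi.2.1 a; rewrite Hi_def; exact: qtens_rel_diag_char Hg HT.2.1 z.
have [B [B_bilin B_diag]] := quadratic_diag_bilin e_span e_free k_quad Q_char k_char.
have [phi [[phi_lin _] [phi_t _]]] := HTQ.2.2 _ _ _ _ (lie_axioms0 T)
  (qtens_rel_bilin (qsharp_quotient_abelian Hpi Hpihom) Q_char B_bilin).
have phi_p_i : (phi \o p) \o i =1 i.
  apply: is_Gamma_lin_eq HG (lin_comp Hi (lin_comp Hp.1 phi_lin)) Hi _ => a /=.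
  by have [z <-] := Hpi.2.1 a; rewrite Hi_def Hp_t phi_t B_diag /= Hi_def.
by rewrite -phi_p_i /= pix0 (lin0 phi_lin).
Qed.
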